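(* Let $q\ge1$ and $t\ge0$ be integers. If a code $\mathcal{C}\subseteq\mathcal{S}_{\mathrm{all}}^q$ is a $t$-tail-insertion-detecting code, then it is a $t$-tail-insertion-correcting code.
   Context: Let $[q]=\{0,1,\dots,q-1\}$. For $1\le m\le q$, a partial permutation of length $m$ over $[q]$ is a sequence $\pi=(\pi_1,\dots,\pi_m)$ of $m$ pairwise distinct elements of $[q]$. Let $\mathcal{S}_m^q$ be the set of all partial permutations of length $m$ and $\mathcal{S}_{\mathrm{all}}^q=\bigcup_{m=1}^{q}\mathcal{S}_m^q$. A code is any subset of $\mathcal{S}_{\mathrm{all}}^q$. Juxtaposition $\omega\pi$ denotes concatenation with $\omega$ on the left. For an integer $t\ge0$, $\mathcal{B}_{\mathrm{ins}}^t(\pi)$ is the set of all $\omega\pi\in\mathcal{S}_{\mathrm{all}}^q$ where $\omega$ is a (possibly empty) sequence of at most $t$ elements of $[q]$ (so all entries of $\omega\pi$ are pairwise distinct). A code $\mathcal{C}$ is $t$-tail-insertion-detecting if $\mathcal{C}\cap\mathcal{B}_{\mathrm{ins}}^t(\pi)=\{\pi\}$ for every $\pi\in\mathcal{C}$, and $t$-tail-insertion-correcting if $\mathcal{B}_{\mathrm{ins}}^t(\pi_1)\cap\mathcal{B}_{\mathrm{ins}}^t(\pi_2)=\emptyset$ for all distinct $\pi_1,\pi_2\in\mathcal{C}$. *)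

From mathcomp Require Import all_boot.
Set Implicit Arguments. Unset Strict Implicit. Unset Printing Implicit Defensive.

(* [q] = {0,...,q-1}; sequences are seq nat with entries < q. *)

Definition is_pperm (q : nat) (pi : seq nat) : Prop :=
  [/\ 1 <= size pi <= q, uniq pi & all (fun x => x < q) pi].

Definition S_all (q : nat) : seq nat -> Prop := is_pperm q.

Definition is_code (q : nat) (C : seq nat -> Prop) : Prop :=
  forall pi, C pi -> S_all q pi.

Definition B_ins (q t : nat) (pi : seq nat) (sigma : seq nat) : Prop :=
  exists omega : seq nat,
    [/\ size omega <= t, all (fun x => x < q) omega,
        sigma = omega ++ pi & S_all q sigma].

Definition tail_ins_detecting (q t : nat) (C : seq nat -> Prop) : Prop :=
  forall pi, C pi -> forall sigma, (C sigma /\ B_ins q t pi sigma) <-> sigma = pi.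

Definition tail_ins_correcting (q t : nat) (C : seq nat -> Prop) : Prop :=
  forall pi1 pi2, C pi1 -> C pi2 -> pi1 <> pi2 ->
    forall sigma, ~ (B_ins q t pi1 sigma /\ B_ins q t pi2 sigma).

From mathcomp Require Import all_boot.
Set Implicit Arguments. Unset Strict Implicit. Unset Printing Implicit Defensive.

(* Two insertion balls meet only if one centre lies in the ball of the other:
   the word reached from both is [w1 ++ pi1 = w2 ++ pi2], and if [w1] is the
   shorter prefix then [pi1 = drop (size w1) w2 ++ pi2] is [pi2] with a shorter
   head inserted.  Detection forbids exactly this between distinct codewords. *)

Lemma cat_eq_drop (T : Type) (w1 w2 s1 s2 : seq T) :
  size w1 <= size w2 -> w1 ++ s1 = w2 ++ s2 -> s1 = drop (size w1) w2 ++ s2.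
Proof.
move=> le_w12 eq_cat.
rewrite -(drop_size_cat s1 (erefl (size w1))) eq_cat drop_cat.
case: ltnP => [// | ge_w12].
have -> : size w1 = size w2 by apply/eqP; rewrite eqn_leq le_w12.
by rewrite subnn drop0 drop_size.
Qed.

Lemma B_ins_suffix (q t : nat) (pi1 pi2 w1 w2 : seq nat) :
  S_all q pi1 -> size w1 <= size w2 -> size w2 <= t ->
  all (fun x => x < q) w2 -> w1 ++ pi1 = w2 ++ pi2 -> B_ins q t pi2 pi1.
Proof.
move=> pi1_pperm le_w12 w2_t w2_q eq_cat.
exists (drop (size w1) w2); split => //.
- by rewrite size_drop (leq_trans (leq_subr _ _)).
- by apply/allP=> x /mem_drop /(allP w2_q).
- exact: cat_eq_drop.
Qed.

Lemma B_ins_meet (q t : nat) (pi1 pi2 sigma : seq nat) :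
  S_all q pi1 -> S_all q pi2 -> B_ins q t pi1 sigma -> B_ins q t pi2 sigma ->
  B_ins q t pi2 pi1 \/ B_ins q t pi1 pi2.
Proof.
move=> pi1_pperm pi2_pperm [w1 [w1_t w1_q -> _]] [w2 [w2_t w2_q eq_cat _]].
case: (leqP (size w1) (size w2)) => [le_w12 | /ltnW le_w21].
- left; exact: B_ins_suffix pi1_pperm le_w12 w2_t w2_q eq_cat.
- right; exact: B_ins_suffix pi2_pperm le_w21 w1_t w1_q (esym eq_cat).
Qed.

Theorem mainTheorem2 (q t : nat) (C : seq nat -> Prop) :
  1 <= q -> is_code q C ->
  tail_ins_detecting q t C -> tail_ins_correcting q t C.
Proof.
move=> _ C_code C_det pi1 pi2 C_pi1 C_pi2 neq_pi sigma [B1 B2].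
have [B21 | B12] := B_ins_meet (C_code _ C_pi1) (C_code _ C_pi2) B1 B2.
- by apply: neq_pi; apply/(C_det _ C_pi2).
- by apply: neq_pi; apply/esym/(C_det _ C_pi1).
Qed.
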